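(* Let $\mathbf A\in\mathbb C^{n\times n}$ with $\operatorname{Ind}\mathbf A=k$ and $\operatorname{rank}\mathbf A^{k+1}=\operatorname{rank}\mathbf A^{k}=r\le n$. Then $\mathbf A\mathbf A^{D}=(q_{ij})$ satisfies, for all $i,j=1,\dots,n$, \[q_{ij}=\frac{\sum_{\alpha\in I_{r,n}\{j\}}\left|\left(\mathbf A^{k+1}_{j.}(\mathbf a^{(k+1)}_{i.})\right)^{\alpha}_{\alpha}\right|}{\sum_{\alpha\in I_{r,n}}\left|(\mathbf A^{k+1})^{\alpha}_{\alpha}\right|},\] where $\mathbf a^{(k+1)}_{i.}$ is the $i$-th row of $\mathbf A^{k+1}$.
   Context: $\operatorname{Ind}\mathbf A$ is the smallest nonnegative $k$ with $\operatorname{rank}\mathbf A^{k+1}=\operatorname{rank}\mathbf A^{k}$; the Drazin inverse $\mathbf A^{D}$ is the unique $\mathbf X$ with $\mathbf A^{k+1}\mathbf X=\mathbf A^{k}$, $\mathbf X\mathbf A\mathbf X=\mathbf X$, $\mathbf A\mathbf X=\mathbf X\mathbf A$. $\mathbf M_{j.}(\mathbf c)$ denotes $\mathbf M$ with its $j$-th row replaced by the row vector $\mathbf c$. $I_{r,n}$ is the set of strictly increasing sequences of $r$ elements of $\{1,\dots,n\}$, $I_{r,n}\{j\}=\{\alpha\in I_{r,n}:j\in\alpha\}$, $\mathbf M^{\alpha}_{\alpha}$ is the principal submatrix indexed by $\alpha$, $|\cdot|$ is the determinant. *)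

From HB Require Import structures.
From mathcomp Require Import all_boot all_order all_algebra.
Set Implicit Arguments. Unset Strict Implicit. Unset Printing Implicit Defensive.
Import Order.TTheory GRing.Theory Num.Theory.
Local Open Scope ring_scope.

Definition is_index (F : fieldType) (n : nat) (A : 'M[F]_n) (k : nat) : Prop :=
  \rank (A ^+ k.+1) = \rank (A ^+ k) /\
  (forall j : nat, (j < k)%N -> \rank (A ^+ j.+1) <> \rank (A ^+ j)).

Definition is_drazin_inverse (F : fieldType) (n : nat) (A X : 'M[F]_n) : Prop :=
  exists k : nat, is_index A k /\
    A ^+ k.+1 *m X = A ^+ k /\ X *m A *m X = X /\ A *m X = X *m A.

Definition row_repl (F : fieldType) (n : nat) (M : 'M[F]_n) (j : 'I_n)
  (c : 'rV[F]_n) : 'M[F]_n :=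
  \matrix_(a < n, b < n) (if a == j then c 0 b else M a b).

(* |M^alpha_alpha| : principal minor of M indexed by the set alpha
   (rows/columns taken in increasing order, as enum of 'I_n is sorted). *)
Definition pminor (F : fieldType) (n : nat) (M : 'M[F]_n) (alpha : {set 'I_n}) : F :=
  \det (mxsub (@enum_val _ (mem alpha)) (@enum_val _ (mem alpha)) M).

From HB Require Import structures.
From mathcomp Require Import all_boot all_order all_algebra fingroup perm.
From mathcomp Require Import ring.
Set Implicit Arguments. Unset Strict Implicit. Unset Printing Implicit Defensive.
Import Order.TTheory GRing.Theory Num.Theory.
Local Open Scope ring_scope.

(* With P := A^(k+1) and Y := (A^D)^(k+1) we have A A^D = P Y, P Y P = P and
   P Y = Y P.  For a full-rank factorization P = B C with r = rank P, this
   forces C B to be invertible and A A^D = B (C B)^-1 C.  By Cauchy-Binet the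
   sum of the r x r principal minors of B C is det (C B).  Replacing row j of
   P by its row i amounts to replacing row j of B by its row i, and the minors
   containing j are then the full sum minus the minors of B C with row j of B
   zeroed.  The matrix determinant lemma turns this difference into
   det (C B) times the (i, j) entry of B (C B)^-1 C. *)

Section CauchyBinet.
Variable R : comPzRingType.

Lemma det_mulmx_ffun r m (Y : 'M[R]_(r, m)) (X : 'M[R]_(m, r)) :
  \det (Y *m X) =
    \sum_(f : {ffun 'I_r -> 'I_m}) (\prod_a Y a (f a)) * \det (rowsub f X).
Proof.
rewrite /determinant.
transitivity (\sum_(s : 'S_r) \sum_(f : {ffun 'I_r -> 'I_m})
   (-1) ^+ s * ((\prod_a Y a (f a)) * \prod_a X (f a) (s a))).
  apply: eq_bigr => s _; rewrite -big_distrr /=; congr (_ * _).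
  under eq_bigr do rewrite mxE.
  rewrite (bigA_distr_bigA (fun a l => Y a l * X l (s a))) /=.
  by apply: eq_bigr => f _; rewrite big_split.
rewrite exchange_big; apply: eq_bigr => f _ /=.
rewrite big_distrr /=; apply: eq_bigr => s _.
rewrite mulrCA; congr (_ * (_ * _)).
by apply: eq_bigr => a _; rewrite !mxE.
Qed.

Variables (N r : nat).
Implicit Types (A : {set 'I_N.+1}) (f : {ffun 'I_r -> 'I_N.+1}).

Definition enum_nth A (a : 'I_r) : 'I_N.+1 := nth ord0 (enum A) a.

Section EnumNth.
Variable A : {set 'I_N.+1}.
Hypothesis cardA : #|A| = r.

Lemma enum_nth_mem a : enum_nth A a \in A.
Proof. by rewrite -mem_enum mem_nth // -cardE cardA. Qed.

Lemma enum_nth_inj : injective (enum_nth A).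
Proof.
move=> a b /eqP; rewrite nth_uniq ?enum_uniq -?cardE ?cardA //.
by move/eqP/val_inj.
Qed.

Lemma index_enum_nth a : index (enum_nth A a) (enum A) = a.
Proof. by rewrite index_uniq ?enum_uniq // -cardE cardA. Qed.

Lemma imset_enum_nth (g : 'I_r -> 'I_r) :
  injective g -> [set enum_nth A (g a) | a in [set: 'I_r]] = A.
Proof.
move=> g_inj; apply/eqP; rewrite eqEcard; apply/andP; split.
  by apply/subsetP => x /imsetP [a _ ->]; rewrite enum_nth_mem.
rewrite card_imset ?cardsT ?card_ord ?cardA //.
by move=> a b /enum_nth_inj /g_inj.
Qed.

End EnumNth.

(* An injection f : 'I_r -> 'I_N.+1 is determined by its image A and by the
   permutation g of 'I_r with f = enum_nth A \o g. *)
Definition enum_comp (p : {set 'I_N.+1} * {ffun 'I_r -> 'I_r}) :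
  {ffun 'I_r -> 'I_N.+1} := [ffun a => enum_nth p.1 (p.2 a)].

Definition image_index f : {set 'I_N.+1} * {ffun 'I_r -> 'I_r} :=
  let A := [set f a | a in [set: 'I_r]] in
  (A, [ffun a => insubd a (index (f a) (enum A))]).

Lemma image_indexK f : injectiveb f -> enum_comp (image_index f) = f.
Proof.
move=> /injectiveP f_inj; apply/ffunP => a; rewrite !ffunE /= /enum_nth.
set A := [set f x | x in [set: 'I_r]].
have fA : f a \in A by apply: imset_f.
have cardA : #|A| = r by rewrite card_imset ?cardsT ?card_ord.
rewrite val_insubd -[X in (_ < X)%N]cardA cardE index_mem mem_enum fA.
by rewrite nth_index ?mem_enum.
Qed.

Lemma enum_comp_injectiveE p :
  injectiveb (enum_comp p) && (image_index (enum_comp p) == p) =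
  (#|p.1| == r) && injectiveb p.2.
Proof.
case: p => A g /=; apply/idP/idP.
  case/andP => /injectiveP comp_inj /eqP comp_id.
  have g_inj : injective g.
    by move=> a b eab; apply: comp_inj; rewrite !ffunE /= eab.
  apply/andP; split; last exact/injectiveP.
  by rewrite -[A](congr1 fst comp_id) /= card_imset ?cardsT ?card_ord.
case/andP => /eqP cardA /injectiveP g_inj.
have comp_inj : injective (enum_comp (A, g)).
  by move=> a b; rewrite !ffunE /= => /(enum_nth_inj cardA) /g_inj.
rewrite (introT (injectiveP _) comp_inj) /=; apply/eqP.
have imA : [set enum_comp (A, g) a | a in [set: 'I_r]] = A.
  rewrite -[RHS](imset_enum_nth cardA g_inj).
  by apply: eq_in_imset => a _; rewrite ffunE.
rewrite /image_index imA; congr (_, _); apply/ffunP => a; rewrite !ffunE /=.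
by apply: val_inj; rewrite val_insubd index_enum_nth // ltn_ord.
Qed.

Lemma sum_injective_ffun (G : {ffun 'I_r -> 'I_N.+1} -> R) :
  (forall f, ~~ injectiveb f -> G f = 0) ->
  \sum_f G f = \sum_(A : {set 'I_N.+1} | #|A| == r)
                 \sum_(g : {ffun 'I_r -> 'I_r}) G [ffun a => enum_nth A (g a)].
Proof.
move=> G0.
rewrite (bigID (fun f => injectiveb f)) /= [S in _ + S]big1 ?addr0; last first.
  by move=> f /G0.
transitivity (\sum_(A : {set 'I_N.+1} | #|A| == r)
                \sum_(g : {ffun 'I_r -> 'I_r} | injectiveb g) G (enum_comp (A, g))).
  rewrite pair_big_dep (reindex_onto enum_comp image_index) /=; last first.
    by move=> f; apply: image_indexK.
  by apply: eq_bigl => p; rewrite enum_comp_injectiveE.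
apply: eq_bigr => A /eqP cardA.
rewrite [in RHS](bigID (fun g : {ffun 'I_r -> 'I_r} => injectiveb g)) /=.
rewrite [S in _ = _ + S]big1 ?addr0 //.
move=> g g_ninj; apply: G0; apply: contra g_ninj => /injectiveP comp_inj.
by apply/injectiveP => a b eab; apply: comp_inj; rewrite !ffunE /= eab.
Qed.

Lemma cauchy_binet (Y : 'M[R]_(r, N.+1)) (X : 'M[R]_(N.+1, r)) :
  \det (Y *m X) = \sum_(A : {set 'I_N.+1} | #|A| == r)
     \det (colsub (enum_nth A) Y) * \det (rowsub (enum_nth A) X).
Proof.
rewrite det_mulmx_ffun (@sum_injective_ffun
   (fun f => (\prod_a Y a (f a)) * \det (rowsub f X))); last first.
  move=> f /injectivePn [a1 [a2 a12 fa12]].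
  by rewrite (determinant_alternate a12) ?mulr0 // => b; rewrite !mxE fa12.
apply: eq_bigr => A _; rewrite -det_mulmx det_mulmx_ffun.
apply: eq_bigr => g _; congr (_ * _).
  by apply: eq_bigr => a _; rewrite !mxE ffunE.
by congr (\det _); apply/matrixP => a b; rewrite !mxE ffunE.
Qed.

End CauchyBinet.

Lemma det_1_add_mul (R : comPzRingType) s (u : 'cV[R]_s) (v : 'rV[R]_s) :
  \det (1%:M + u *m v) = 1 + (v *m u) 0 0.
Proof.
have E1 : block_mx (1%:M + u *m v) u 0 1%:M *m block_mx 1%:M 0 (- v) 1%:M
          = block_mx 1%:M u (- v) (1%:M : 'M_1).
  rewrite mulmx_block ?mulmx1 ?mul1mx ?mulmx0 ?mul0mx ?addr0 ?add0r.
  by rewrite mulmxN addrK.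
have E2 : block_mx 1%:M 0 (- v) 1%:M *m block_mx 1%:M u 0 (1%:M + v *m u)
          = block_mx 1%:M u (- v) (1%:M : 'M_1).
  rewrite mulmx_block ?mulmx1 ?mul1mx ?mulmx0 ?mul0mx ?addr0 ?add0r.
  by rewrite mulNmx addrCA addNr addr0.
have := congr1 determinant (etrans E1 (esym E2)).
rewrite !det_mulmx !det_ublock !det_lblock !det1 ?mulr1 ?mul1r.
by move->; rewrite det_mx11 !mxE.
Qed.

Lemma det_add_mul (R : comUnitRingType) s (M : 'M[R]_s)
    (u : 'cV[R]_s) (v : 'rV[R]_s) :
  M \in unitmx -> \det (M + u *m v) = \det M * (1 + (v *m invmx M *m u) 0 0).
Proof.
move=> M_unit.
have -> : M + u *m v = M *m (1%:M + (invmx M *m u) *m v).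
  by rewrite mulmxDr mulmx1 !mulmxA mulmxV // mul1mx.
by rewrite det_mulmx det_1_add_mul mulmxA.
Qed.

Section PrincipalMinors.
Variable F : fieldType.

Lemma pminor_enum_nth N r (M : 'M[F]_N.+1) (A : {set 'I_N.+1}) :
  #|A| = r -> pminor M A = \det (mxsub (@enum_nth N r A) (@enum_nth N r A) M).
Proof.
move=> cardA; rewrite /pminor; case: r / cardA.
by congr (\det _); apply/matrixP => a b; rewrite !mxE !(enum_val_nth ord0).
Qed.

Lemma sum_pminor_mulmx N r (X : 'M[F]_(N.+1, r)) (Y : 'M[F]_(r, N.+1)) :
  \sum_(A : {set 'I_N.+1} | #|A| == r) pminor (X *m Y) A = \det (Y *m X).
Proof.
rewrite cauchy_binet; apply: eq_bigr => A /eqP cardA.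
by rewrite (pminor_enum_nth _ cardA) mxsub_mul det_mulmx mulrC.
Qed.

Lemma pminor_row0 n (M : 'M[F]_n) (A : {set 'I_n}) j :
  j \in A -> row j M = 0 -> pminor M A = 0.
Proof.
move=> jA /rowP Mj0; rewrite /pminor (expand_det_row _ (enum_rank_in jA j)).
apply: big1 => b _; rewrite mxE enum_rankK_in //.
by have := Mj0 (enum_val b); rewrite !mxE => ->; rewrite mul0r.
Qed.

Lemma eq_pminor n (M M' : 'M[F]_n) (A : {set 'I_n}) :
  {in A, forall a, row a M = row a M'} -> pminor M A = pminor M' A.
Proof.
move=> eqMM'; rewrite /pminor; congr (\det _); apply/matrixP => a b.
have /rowP/(_ (enum_val b)) := eqMM' _ (enum_valP a).
by rewrite !mxE.
Qed.

Lemma sum_pminor_mem N s (U V : 'M[F]_(N.+1, s)) (W : 'M[F]_(s, N.+1)) j :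
  (forall a, a != j -> row a U = row a V) -> row j V = 0 ->
  \sum_(A : {set 'I_N.+1} | (#|A| == s) && (j \in A)) pminor (U *m W) A
    = \det (W *m U) - \det (W *m V).
Proof.
move=> eqUV Vj0; rewrite -!sum_pminor_mulmx.
rewrite [in RHS](bigID (fun A : {set 'I_N.+1} => j \in A)) /=.
rewrite [S in _ = _ - S](bigID (fun A : {set 'I_N.+1} => j \in A)) /=.
rewrite [S in _ = _ - (S + _)]big1 ?add0r; last first.
  by move=> A /andP [_ jA]; apply: (pminor_row0 jA); rewrite row_mul Vj0 mul0mx.
under [in S in _ - S]eq_bigr => A /andP [_ jA].
  rewrite (eq_pminor (M := V *m W) (M' := U *m W)); last first.
    by move=> a aA; rewrite !row_mul eqUV //; apply: contraNneq jA => <-.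
  over.
by rewrite addrK.
Qed.

Lemma mulmx_row_update m n p (W : 'M[F]_(m, n)) (U V : 'M[F]_(n, p)) j :
  (forall a, a != j -> row a U = row a V) ->
  W *m U = W *m V + col j W *m (row j U - row j V).
Proof.
move=> eqUV; apply/matrixP => a b.
rewrite !mxE (bigD1 j) //= [S in _ = S + _](bigD1 j) //= big_ord1 !mxE.
have -> : \sum_(l < n | l != j) W a l * U l b = \sum_(l < n | l != j) W a l * V l b.
  by apply: eq_bigr => l lj; have /rowP/(_ b) := eqUV l lj; rewrite !mxE => ->.
ring.
Qed.

Lemma mulmx3E m1 m2 m3 m4 (U : 'M[F]_(m1, m2)) (V : 'M[F]_(m2, m3))
    (W : 'M[F]_(m3, m4)) i j :
  (U *m V *m W) i j = (row i U *m V *m col j W) 0 0.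
Proof. by rewrite -!row_mul colE !mulmxA -colE !mxE. Qed.

Lemma projector_entry_pminor N s (B : 'M[F]_(N.+1, s)) (C : 'M[F]_(s, N.+1))
    (i j : 'I_N.+1) :
  C *m B \in unitmx ->
  (B *m invmx (C *m B) *m C) i j =
    (\sum_(A : {set 'I_N.+1} | (#|A| == s) && (j \in A))
        pminor (row_repl (B *m C) j (row i (B *m C))) A)
    / (\sum_(A : {set 'I_N.+1} | #|A| == s) pminor (B *m C) A).
Proof.
move=> CB_unit; set M := C *m B.
set Bi := \matrix_(a, b) (if a == j then B i b else B a b).
set Bj0 := \matrix_(a, b) (if a == j then 0 else B a b).
have offj : forall U : 'M[F]_(N.+1, s),
    (forall a b, a != j -> U a b = B a b) -> forall a, a != j -> row a U = row a B.
  by move=> U UB a aj; apply/rowP => b; rewrite !mxE UB.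
have Bi_off : forall a, a != j -> row a Bi = row a B.
  by apply: offj => a b aj; rewrite mxE (negbTE aj).
have Bj0_off : forall a, a != j -> row a Bj0 = row a B.
  by apply: offj => a b aj; rewrite mxE (negbTE aj).
have Bij : row j Bi = row i B by apply/rowP => b; rewrite !mxE eqxx.
have Bj0j : row j Bj0 = 0 by apply/rowP => b; rewrite !mxE eqxx.
have -> : row_repl (B *m C) j (row i (B *m C)) = Bi *m C.
  apply/matrixP => a b; rewrite /row_repl !mxE.
  by case: eqP => [->|/eqP aj]; apply: eq_bigr => l _; rewrite !mxE ?eqxx ?(negbTE aj).
rewrite (@sum_pminor_mem _ _ _ Bj0) ?sum_pminor_mulmx; last 2 first.
- by move=> a aj; rewrite Bi_off ?Bj0_off.
- exact: Bj0j.
rewrite (mulmx_row_update C Bi_off) (mulmx_row_update C Bj0_off) Bij Bj0j -/M.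
rewrite !det_add_mul // mulmx3E sub0r !mulmxBl !mulNmx.
set wi := row i B *m invmx M *m col j C; set wj := row j B *m invmx M *m col j C.
have detM_neq0 : \det M != 0 by rewrite -unitfE -unitmxE.
by rewrite !mxE; field.
Qed.

End PrincipalMinors.

Section RankFactorization.
Variables (F : fieldType) (n s : nat) (P Y : 'M[F]_n).
Variables (B : 'M[F]_(n, s)) (C : 'M[F]_(s, n)).
Hypotheses (BC_P : B *m C = P) (rankP : \rank P = s).
Hypotheses (PYP : P *m Y *m P = P) (YP_PY : Y *m P = P *m Y).

Let P_factor : P = Y *m B *m (C *m B) *m C.
Proof. by rewrite -{1}PYP -YP_PY -BC_P !mulmxA. Qed.

Let C_row_free : row_free C.
Proof.
rewrite /row_free eqn_leq rank_leq_row /= -[X in (X <= _)%N]rankP -BC_P.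
exact: mxrankM_maxr.
Qed.

Lemma rank_factor_unitmx : C *m B \in unitmx.
Proof.
rewrite -row_free_unit /row_free eqn_leq rank_leq_row /= -[X in (X <= _)%N]rankP.
rewrite P_factor; apply: leq_trans (mxrankM_maxl _ _) _; exact: mxrankM_maxr.
Qed.

Lemma rank_factor_projector : P *m Y = B *m invmx (C *m B) *m C.
Proof.
have YB_CB : Y *m B *m (C *m B) = B.
  by apply: (row_free_inj C_row_free); rewrite -P_factor BC_P.
rewrite -YP_PY -BC_P mulmxA; congr (_ *m _).
rewrite -[X in X *m invmx _]YB_CB mulmxK //.
exact: rank_factor_unitmx.
Qed.

End RankFactorization.

Lemma is_index_uniq (F : fieldType) n (A : 'M[F]_n) k k' :
  is_index A k -> is_index A k' -> k = k'.
Proof.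
move=> [Ak min_k] [Ak' min_k']; case: (ltngtP k k') => // [lt_kk'|lt_k'k].
- by case: (min_k' _ lt_kk').
- by case: (min_k _ lt_k'k).
Qed.

Section DrazinPower.
Variables (F : fieldType) (n k : nat) (A X : 'M[F]_n).
Hypotheses (AkX : A ^+ k.+1 *m X = A ^+ k) (XAX : X *m A *m X = X)
  (AX_XA : A *m X = X *m A).

Let cAX : GRing.comm A X := AX_XA.

Lemma drazin_pow_mulmx : A ^+ k.+1 *m X ^+ k.+1 = A *m X.
Proof.
have AX_idem : (A * X) * (A * X) = A * X.
  by rewrite -mulrA (mulrA X A X); congr (_ * _); exact: XAX.
rewrite -[_ *m _]/(_ * _) -exprMn_comm //.
by elim: k => [|m IHm]; rewrite ?expr1 // exprS IHm AX_idem.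
Qed.

Lemma drazin_pow_comm : X ^+ k.+1 *m A ^+ k.+1 = A ^+ k.+1 *m X ^+ k.+1.
Proof. exact: (commrX _ (commr_sym (commrX _ cAX))). Qed.

Lemma drazin_pow_inner :
  A ^+ k.+1 *m X ^+ k.+1 *m A ^+ k.+1 = A ^+ k.+1.
Proof.
rewrite drazin_pow_mulmx -mulmxA.
have -> : X *m A ^+ k.+1 = A ^+ k.+1 *m X := commrX _ (commr_sym cAX).
by rewrite AkX -[_ *m _]/(_ * _) -exprS.
Qed.

End DrazinPower.

Theorem corollary2p5 (C : numClosedFieldType) (n : nat) (A : 'M[C]_n)
    (k r : nat) (AD : 'M[C]_n) :
  is_index A k ->
  \rank (A ^+ k.+1) = r ->
  \rank (A ^+ k) = r ->
  is_drazin_inverse A AD ->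
  forall i j : 'I_n,
    (A *m AD) i j =
      (\sum_(alpha : {set 'I_n} | (#|alpha| == r) && (j \in alpha))
          pminor (row_repl (A ^+ k.+1) j (row i (A ^+ k.+1))) alpha)
      / (\sum_(alpha : {set 'I_n} | #|alpha| == r) pminor (A ^+ k.+1) alpha).
Proof.
case: n A AD => [|n] A AD; first by move=> _ _ _ _ [].
move=> ind_k rank_r _ [k' [ind_k' [AkX [XAX AX_XA]]]] i j.
move: AkX; rewrite -(is_index_uniq ind_k ind_k') => AkX; subst r.
set P := A ^+ k.+1; set Y := AD ^+ k.+1.
have PY_PYP : P *m Y *m P = P := drazin_pow_inner AkX XAX AX_XA.
have YP_PY : Y *m P = P *m Y := drazin_pow_comm k AX_XA.
rewrite -(drazin_pow_mulmx k XAX AX_XA) -/P -/Y.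
rewrite (rank_factor_projector (mulmx_base P) erefl PY_PYP YP_PY).
have CB_unit := rank_factor_unitmx (mulmx_base P) erefl PY_PYP YP_PY.
by rewrite projector_entry_pminor // mulmx_base.
Qed.
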